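(* Let $T\ge1$ and consider the MDP with states $\{1,2\}$ defined as follows. In state 1 there are two actions: action ''up'' gives reward $1$ and moves to state 1 with probability $1-\frac1T$ and to state 2 with probability $\frac1T$; action ''down'' gives reward $\frac12$ and moves to state 2 deterministically. In state 2 there is a single action, giving reward $\frac12$ and staying in state 2. Then $\|h^\star\|_{\mathrm{sp}}=\frac T2$ and $\inf_{\pi:\rho^\pi=\rho^\star}\|h^\pi\|_{\mathrm{sp}}=0$.
   Context: Policies are stationary Markovian. Gain $\rho^\pi(s)=\lim_T\frac1T\mathbb{E}^\pi_s[\sum_{t<T}r(S_t,A_t)]$, $\rho^\star=\sup_\pi\rho^\pi$; bias $h^\pi(s)=\mathrm{C}\text{-}\lim_T\mathbb{E}^\pi_s[\sum_{t<T}(r(S_t,A_t)-\rho^\pi(S_t))]$; $h^\star$ is the bias of a Blackwell-optimal policy (a policy optimal for the $\gamma$-discounted problem for all $\gamma$ sufficiently close to 1). $\|x\|_{\mathrm{sp}}=\max x-\min x$. *)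

From Stdlib Require Import Reals Lra.
From Coquelicot Require Import Coquelicot.
Open Scope R_scope.

Fixpoint fsum (n : nat) (f : nat -> R) : R :=
  match n with O => 0 | S k => fsum k f + f k end.

Fixpoint fmax (n : nat) (f : nat -> R) : R :=
  match n with O => f O | S k => Rmax (fmax k f) (f (S k)) end.
Fixpoint fmin (n : nat) (f : nat -> R) : R :=
  match n with O => f O | S k => Rmin (fmin k f) (f (S k)) end.

(* A finite MDP: states 0..nS-1, actions 0..nA-1, [avail s a] says action a is
   available in state s, reward [rew s a], transition prob [trans s a s']. *)
Record MDP := mkMDP {
  nS : nat; nA : nat;
  avail : nat -> nat -> Prop;
  rew : nat -> nat -> R;
  trans : nat -> nat -> nat -> R }.

(* Stationary Markovian (possibly randomized) policy: pi s a = prob. of a in s. *)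
Definition policy (M : MDP) (pi : nat -> nat -> R) : Prop :=
  forall s, (s < nS M)%nat ->
    (forall a, (a < nA M)%nat -> 0 <= pi s a) /\
    (forall a, (a < nA M)%nat -> ~ avail M s a -> pi s a = 0) /\
    fsum (nA M) (fun a => pi s a) = 1.

Definition Ppi (M : MDP) pi (s s' : nat) : R :=
  fsum (nA M) (fun a => pi s a * trans M s a s').
Definition rpi (M : MDP) pi (s : nat) : R :=
  fsum (nA M) (fun a => pi s a * rew M s a).

(* iterP t f s = E^pi_s [ f(S_t) ]  (= (P_pi^t f)(s)) *)
Fixpoint iterP (M : MDP) pi (t : nat) (f : nat -> R) (s : nat) : R :=
  match t with
  | O => f s
  | S k => fsum (nS M) (fun s' => Ppi M pi s s' * iterP M pi k f s')
  end.

(* E^pi_s [ r(S_t, A_t) ] = E^pi_s [ r_pi(S_t) ] *)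
Definition exp_rew (M : MDP) pi (t s : nat) : R := iterP M pi t (rpi M pi) s.

Definition gain (M : MDP) pi (s : nat) : R :=
  real (Lim_seq (fun N => fsum N (fun t => exp_rew M pi t s) / INR N)).

Definition rho_star (M : MDP) (s : nat) : R :=
  real (Lub_Rbar (fun x => exists pi, policy M pi /\ x = gain M pi s)).

(* bias h^pi(s) = Cesaro-lim_N E^pi_s[sum_{t<N} (r(S_t,A_t) - rho^pi(S_t))] *)
Definition bias (M : MDP) pi (s : nat) : R :=
  real (Lim_seq (fun N =>
    fsum N (fun n =>
      fsum n (fun t => exp_rew M pi t s - iterP M pi t (gain M pi) s)) / INR N)).

Definition disc_value (M : MDP) pi (g : R) (s : nat) : R :=
  Series (fun t => g ^ t * exp_rew M pi t s).

Definition blackwell_optimal (M : MDP) pi : Prop :=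
  policy M pi /\
  exists g0, 0 <= g0 < 1 /\
    forall g, g0 < g < 1 ->
      forall pi', policy M pi' ->
        forall s, (s < nS M)%nat -> disc_value M pi' g s <= disc_value M pi g s.

Definition span (M : MDP) (h : nat -> R) : R :=
  fmax (pred (nS M)) h - fmin (pred (nS M)) h.

(* The example MDP.  Paper state 1 = index 0, paper state 2 = index 1.
   Action 0 = "up", action 1 = "down"; in state index 1 only action 0 exists. *)
Definition ex_mdp (T : R) : MDP := {|
  nS := 2; nA := 2;
  avail := fun s a => (s = 0 /\ (a = 0 \/ a = 1))%nat \/ (s = 1 /\ a = 0)%nat;
  rew := fun s a =>
    match s, a with
    | O, O => 1
    | O, S O => 1/2
    | S O, O => 1/2
    | _, _ => 0
    end;
  trans := fun s a s' =>
    match s, a, s' with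
    | O, O, O => 1 - / T
    | O, O, S O => / T
    | O, S O, S O => 1
    | S O, O, S O => 1
    | _, _, _ => 0
    end |}.

From Stdlib Require Import Reals Lra Lia.
From Coquelicot Require Import Coquelicot.
Open Scope R_scope.

(** A policy of the example is determined by the probability [p] of playing
    "up" in state 1: the chain then stays in state 1 with probability
    [q = p (1 - 1/T)] per step and is absorbed in state 2, where the reward is
    [1/2].  Hence the expected reward at time [t] from state 1 is
    [1/2 + (p/2) q^t], and every quantity of the statement is a Cesàro limit or
    a discounted sum of such affine-geometric sequences: the gain is [1/2]
    everywhere, the bias is [(p/2)/(1-q)] in state 1 and [0] in state 2, and
    the discounted value in state 1 is [(1/2)/(1-γ) + (p/2)/(1 - γ q)].  The
    latter is strictly increasing in [p], so the Blackwell-optimal policies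
    are exactly those with [p = 1], whose bias span is [(1/2)/(1/T) = T/2];
    the gain-optimal policy with [p = 0] has bias span [0]. *)

Lemma fsum_ext n f g : (forall t, f t = g t) -> fsum n f = fsum n g.
Proof. intros E; induction n as [|n IH]; simpl; [reflexivity | now rewrite IH, E]. Qed.

Lemma fsum_affine n c e f :
  fsum n (fun t => c + e * f t) = c * INR n + e * fsum n f.
Proof. induction n as [|n IH]; simpl fsum; [simpl; ring | rewrite IH, S_INR; ring]. Qed.

Lemma fsum_geom n q : q <> 1 -> fsum n (fun t => q ^ t) = (1 - q ^ n) / (1 - q).
Proof.
  intros Hq.
  assert (E : fsum n (fun t => q ^ t) * (1 - q) = 1 - q ^ n).
  { induction n as [|n IH]; simpl fsum; [simpl; ring|].
    rewrite Rmult_plus_distr_r, IH; simpl; ring. }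
  rewrite <- E; field; lra.
Qed.

Lemma real_Lim_seq_unique (u : nat -> R) (l : R) :
  is_lim_seq u l -> real (Lim_seq u) = l.
Proof. intros H; now rewrite (is_lim_seq_unique _ _ H). Qed.

Lemma is_lim_seq_inv_INR_S : is_lim_seq (fun n => / INR (S n)) 0.
Proof.
  apply (is_lim_seq_incr_1 (fun n => / INR n)).
  apply (is_lim_seq_inv INR p_infty); [apply is_lim_seq_INR | discriminate].
Qed.

Lemma is_lim_seq_cesaro_affine_geom c e q : Rabs q < 1 ->
  is_lim_seq (fun N => fsum N (fun t => c + e * q ^ t) / INR N) c.
Proof.
  intros Hq; assert (Hq1 : q <> 1) by (apply Rabs_def2 in Hq; lra).
  apply is_lim_seq_incr_1.
  apply is_lim_seq_ext with (fun n => c + e / (1 - q) * (1 - q ^ S n) * / INR (S n)).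
  { intros n; rewrite fsum_affine, fsum_geom by exact Hq1.
    field; split; try lra; apply not_0_INR; discriminate. }
  assert (L : is_lim_seq (fun n => c + e / (1 - q) * (1 - q ^ S n) * / INR (S n))
                (c + e / (1 - q) * (1 - 0) * 0)).
  { apply is_lim_seq_plus'; [apply is_lim_seq_const|].
    apply is_lim_seq_mult'; [|apply is_lim_seq_inv_INR_S].
    apply is_lim_seq_mult'; [apply is_lim_seq_const|].
    apply is_lim_seq_minus'; [apply is_lim_seq_const|].
    apply (is_lim_seq_incr_1 (fun n => q ^ n)), is_lim_seq_geom, Hq. }
  now rewrite Rmult_0_r, Rplus_0_r in L.
Qed.

Lemma is_series_affine_geom g c e q : Rabs g < 1 -> Rabs (g * q) < 1 ->
  is_series (fun t => g ^ t * (c + e * q ^ t)) (c / (1 - g) + e / (1 - g * q)).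
Proof.
  intros Hg Hgq.
  pose proof (is_series_plus _ _ _ _
    (is_series_scal_r c _ _ (is_series_geom g Hg))
    (is_series_scal_r e _ _ (is_series_geom _ Hgq))) as S.
  apply Rabs_def2 in Hg, Hgq.
  replace (c / (1 - g) + e / (1 - g * q)) with (plus (/ (1 - g) * c) (/ (1 - g * q) * e))
    by (unfold plus; simpl; field; lra).
  eapply is_series_ext; [|exact S].
  intros t; unfold plus; simpl; rewrite Rpow_mult_distr; ring.
Qed.

Lemma div_one_sub_mul_le p k : 0 <= p <= 1 -> 0 <= k < 1 ->
  p / (1 - k * p) <= 1 / (1 - k).
Proof.
  intros Hp Hk.
  assert (0 < 1 - k * p) by nra.
  apply Rmult_le_reg_r with ((1 - k * p) * (1 - k)); [nra|].
  field_simplify; [nra | lra | lra].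
Qed.

Lemma div_one_sub_mul_ge_eq p k : 0 <= p <= 1 -> 0 <= k < 1 ->
  1 / (1 - k) <= p / (1 - k * p) -> p = 1.
Proof.
  intros Hp Hk H.
  assert (0 < 1 - k * p) by nra.
  apply Rmult_le_compat_r with (r := (1 - k * p) * (1 - k)) in H; [|nra].
  field_simplify in H; [nra | lra | lra].
Qed.

Definition pi_up (s a : nat) : R := match a with O => 1 | _ => 0 end.

Definition pi_down (s a : nat) : R :=
  match s, a with O, S O => 1 | S O, O => 1 | _, _ => 0 end.

Section Example.
Variable T : R.
Hypothesis hT : 1 <= T.
Local Notation M := (ex_mdp T).

Lemma pi_up_policy : policy M pi_up.
Proof.
  intros [|[|s]] hs; simpl in hs; try lia; repeat split; simpl; try lra;
    intros [|[|a]] ha; simpl in *; try lia; try lra;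
    intros Na; exfalso; apply Na; auto.
Qed.

Lemma pi_down_policy : policy M pi_down.
Proof.
  intros [|[|s]] hs; simpl in hs; try lia; repeat split; simpl; try lra;
    intros [|[|a]] ha; simpl in *; try lia; try lra;
    intros Na; exfalso; apply Na; auto.
Qed.

Lemma stay_prob_bounds p : 0 <= p <= 1 -> 0 <= p * (1 - / T) < 1.
Proof.
  intros Hp.
  assert (0 < / T <= 1).
  { split; [apply Rinv_0_lt_compat; lra|].
    rewrite <- Rinv_1; apply Rinv_le_contravar; lra. }
  split; [apply Rmult_le_pos|]; nra.
Qed.

Lemma discounted_stay_bounds g : 0 <= g < 1 -> 0 <= g * (1 - / T) < 1.
Proof. intros Hg; pose proof (stay_prob_bounds 1 ltac:(lra)); nra. Qed.

Section Policy.
Variable pi : nat -> nat -> R.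
Hypothesis hpi : policy M pi.
Local Notation p_up := (pi 0%nat 0%nat).
Local Notation q := (pi 0%nat 0%nat * (1 - / T)).

Lemma ex_policy_shape :
  0 <= p_up <= 1 /\ pi 0%nat 1%nat = 1 - p_up /\
  pi 1%nat 0%nat = 1 /\ pi 1%nat 1%nat = 0.
Proof.
  destruct (hpi 0%nat) as [Pos0 [_ Sum0]]; [simpl; lia|].
  destruct (hpi 1%nat) as [_ [Avail1 Sum1]]; [simpl; lia|].
  simpl in Sum0, Sum1.
  assert (pi 1%nat 1%nat = 0).
  { apply Avail1; [simpl; lia|]. simpl; intros [[? _] | [_ ?]]; discriminate. }
  pose proof (Pos0 0%nat ltac:(simpl; lia)); pose proof (Pos0 1%nat ltac:(simpl; lia)).
  repeat split; lra.
Qed.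

Lemma q_abs_lt_1 : Rabs q < 1.
Proof.
  destruct ex_policy_shape as [Hp _]; pose proof (stay_prob_bounds _ Hp).
  rewrite Rabs_pos_eq; lra.
Qed.

Lemma iterP_ex_state1 t f : iterP M pi t f 1%nat = f 1%nat.
Proof.
  destruct ex_policy_shape as (_ & _ & h10 & h11).
  induction t as [|t IH]; [reflexivity|].
  simpl iterP; rewrite IH; unfold Ppi; simpl; rewrite h10, h11; ring.
Qed.

Lemma iterP_ex_state0 t f :
  iterP M pi t f 0%nat = q ^ t * f 0%nat + (1 - q ^ t) * f 1%nat.
Proof.
  destruct ex_policy_shape as (_ & h01 & _ & _).
  induction t as [|t IH]; [simpl; ring|].
  simpl iterP; rewrite IH, iterP_ex_state1; unfold Ppi; simpl; rewrite h01; ring.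
Qed.

Lemma exp_rew_ex_state0 t : exp_rew M pi t 0%nat = 1/2 + p_up / 2 * q ^ t.
Proof.
  destruct ex_policy_shape as (_ & h01 & h10 & h11).
  unfold exp_rew; rewrite iterP_ex_state0; unfold rpi; simpl.
  rewrite h01, h10, h11; field.
Qed.

Lemma exp_rew_ex_state1 t : exp_rew M pi t 1%nat = 1/2.
Proof.
  destruct ex_policy_shape as (_ & _ & h10 & h11).
  unfold exp_rew; rewrite iterP_ex_state1; unfold rpi; simpl.
  rewrite h10, h11; field.
Qed.

Lemma gain_ex s : (s < 2)%nat -> gain M pi s = 1/2.
Proof.
  intros hs; unfold gain; apply real_Lim_seq_unique.
  destruct s as [|[|s]]; [| |lia].
  - eapply is_lim_seq_ext; [|apply (is_lim_seq_cesaro_affine_geom _ (p_up / 2) _ q_abs_lt_1)].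
    intros N; cbv beta; f_equal; apply fsum_ext; intros t; now rewrite exp_rew_ex_state0.
  - eapply is_lim_seq_ext; [|apply (is_lim_seq_cesaro_affine_geom (1/2) 0 0)];
      [|rewrite Rabs_R0; lra].
    intros N; cbv beta; f_equal; apply fsum_ext; intros t; rewrite exp_rew_ex_state1; ring.
Qed.

Lemma iterP_ex_gain t s : (s < 2)%nat -> iterP M pi t (gain M pi) s = 1/2.
Proof.
  intros hs; destruct s as [|[|s]]; [| |lia].
  - rewrite iterP_ex_state0, !gain_ex by lia; ring.
  - rewrite iterP_ex_state1; apply gain_ex; lia.
Qed.

Lemma bias_ex_state0 : bias M pi 0%nat = p_up / 2 / (1 - q).
Proof.
  pose proof q_abs_lt_1 as Hq; assert (q <> 1) by (apply Rabs_def2 in Hq; lra).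
  unfold bias; apply real_Lim_seq_unique.
  eapply is_lim_seq_ext;
    [|apply (is_lim_seq_cesaro_affine_geom _ (- (p_up / 2 / (1 - q))) _ Hq)].
  intros N; cbv beta; f_equal; apply fsum_ext; intros n.
  rewrite (fsum_ext n _ (fun t => 0 + p_up / 2 * q ^ t)).
  2:{ intros t; rewrite exp_rew_ex_state0, iterP_ex_gain by lia; ring. }
  rewrite fsum_affine, fsum_geom by assumption.
  set (r := q) in *; field; lra.
Qed.

Lemma bias_ex_state1 : bias M pi 1%nat = 0.
Proof.
  unfold bias; apply real_Lim_seq_unique.
  eapply is_lim_seq_ext; [|apply (is_lim_seq_cesaro_affine_geom 0 0 0)];
    [|rewrite Rabs_R0; lra].
  intros N; cbv beta; f_equal; apply fsum_ext; intros n.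
  rewrite (fsum_ext n _ (fun t => 0 + 0 * 0 ^ t)).
  2:{ intros t; rewrite exp_rew_ex_state1, iterP_ex_gain by lia; ring. }
  rewrite fsum_affine; ring.
Qed.

Lemma span_bias_ex : span M (bias M pi) = p_up / 2 / (1 - q).
Proof.
  destruct ex_policy_shape as [Hp _]; pose proof (stay_prob_bounds _ Hp).
  assert (0 <= p_up / 2 / (1 - q)).
  { apply Rmult_le_pos; [lra | left; apply Rinv_0_lt_compat; lra]. }
  unfold span; simpl; rewrite bias_ex_state0, bias_ex_state1.
  rewrite Rmax_left, Rmin_right by lra; ring.
Qed.

Lemma disc_value_ex_state0 g : 0 <= g < 1 ->
  disc_value M pi g 0%nat = 1/2 / (1 - g) + p_up / 2 / (1 - g * (1 - / T) * p_up).
Proof.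
  intros Hg; destruct ex_policy_shape as [Hp _]; pose proof (stay_prob_bounds _ Hp).
  unfold disc_value.
  rewrite (Series_ext _ (fun t => g ^ t * (1/2 + p_up / 2 * q ^ t)))
    by (intros t; now rewrite exp_rew_ex_state0).
  rewrite (is_series_unique _ _ (is_series_affine_geom g (1/2) (p_up / 2) q ltac:(rewrite Rabs_pos_eq; lra) ltac:(rewrite Rabs_pos_eq; nra))).
  now rewrite Rmult_assoc, (Rmult_comm (1 - / T)).
Qed.

Lemma disc_value_ex_state1 g : 0 <= g < 1 -> disc_value M pi g 1%nat = 1/2 / (1 - g).
Proof.
  intros Hg; unfold disc_value.
  rewrite (Series_ext _ (fun t => g ^ t * (1/2 + 0 * 0 ^ t)))
    by (intros t; rewrite exp_rew_ex_state1; ring).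
  rewrite (is_series_unique _ _ (is_series_affine_geom g (1/2) 0 0 ltac:(rewrite Rabs_pos_eq; lra) ltac:(rewrite Rmult_0_r, Rabs_R0; lra))).
  field; lra.
Qed.

End Policy.

Lemma rho_star_ex s : (s < 2)%nat -> rho_star M s = 1/2.
Proof.
  intros hs; unfold rho_star.
  rewrite (is_lub_Rbar_unique _ (Finite (1/2))); [reflexivity|].
  split.
  - intros x [pi [hpi ->]]; rewrite gain_ex by assumption; simpl; lra.
  - intros b Hb; apply Hb; exists pi_up; split; [apply pi_up_policy|].
    now rewrite gain_ex by (apply pi_up_policy || assumption).
Qed.

Lemma blackwell_optimal_ex pi :
  blackwell_optimal M pi <-> policy M pi /\ pi 0%nat 0%nat = 1.
Proof.
  split.
  - intros [hpi [g0 [Hg0 Hopt]]]; split; [exact hpi|].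
    set (g := (g0 + 1) / 2); assert (Hg : 0 <= g < 1) by (unfold g; lra).
    pose proof (Hopt g ltac:(unfold g; lra) pi_up pi_up_policy 0%nat ltac:(simpl; lia)) as Hup.
    rewrite !disc_value_ex_state0 in Hup by (assumption || apply pi_up_policy).
    destruct (ex_policy_shape pi hpi) as [Hp _].
    apply (div_one_sub_mul_ge_eq _ (g * (1 - / T))); [exact Hp | |].
    + exact (discounted_stay_bounds g Hg).
    + unfold pi_up in Hup; rewrite Rmult_1_r in Hup; lra.
  - intros [hpi Hp1]; split; [exact hpi|].
    exists 0; split; [lra|]; intros g Hg pi' hpi' [|[|s]] hs; simpl in hs; try lia.
    + rewrite !disc_value_ex_state0, Hp1, Rmult_1_r by (assumption || lra).
      destruct (ex_policy_shape pi' hpi') as [Hp' _].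
      pose proof (div_one_sub_mul_le _ _ Hp' (discounted_stay_bounds g ltac:(lra))).
      lra.
    + now rewrite !disc_value_ex_state1 by (assumption || lra).
Qed.

End Example.

Theorem theorem27 (T : R) (hT : 1 <= T) :
  (exists pi, blackwell_optimal (ex_mdp T) pi) /\
  (forall pi, blackwell_optimal (ex_mdp T) pi ->
     span (ex_mdp T) (bias (ex_mdp T) pi) = T / 2) /\
  Glb_Rbar (fun x => exists pi, policy (ex_mdp T) pi /\
       (forall s, (s < nS (ex_mdp T))%nat ->
          gain (ex_mdp T) pi s = rho_star (ex_mdp T) s) /\
       x = span (ex_mdp T) (bias (ex_mdp T) pi)) = Finite 0.
Proof.
  split; [|split].
  - exists pi_up; apply blackwell_optimal_ex; [exact hT|].
    split; [apply pi_up_policy | reflexivity].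
  - intros pi Hpi; apply blackwell_optimal_ex in Hpi as [hpi Hp1]; [|exact hT].
    rewrite span_bias_ex, Hp1 by assumption.
    field; lra.
  - apply is_glb_Rbar_unique; split.
    + intros x (pi & hpi & _ & ->); simpl.
      destruct (ex_policy_shape T pi hpi) as [Hp _].
      pose proof (stay_prob_bounds T hT _ Hp).
      rewrite span_bias_ex by assumption.
      apply Rmult_le_pos; [lra | left; apply Rinv_0_lt_compat; lra].
    + intros b Hb; apply Hb; exists pi_down; split; [apply pi_down_policy|]; split.
      * intros s hs; now rewrite gain_ex, rho_star_ex by (assumption || apply pi_down_policy).
      * rewrite span_bias_ex by (assumption || apply pi_down_policy); simpl; field; lra.
Qed.
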